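(* Let $(X,r)$ be a square-free non-degenerate symmetric set (of arbitrary cardinality, with $S(X,r)$ embedded in $G(X,r)$) which is not the trivial solution, and suppose its associated symmetric group $(G,r_G)$ satisfies lri. Then (1) for each orbit $X_i$ of the left action of $G$ on $X$, the induced solution on $X_i$ is the trivial solution or a one-element solution; and (2) $\mathrm{mpl}(X,r)=\mathrm{mpl}(G,r_G)=2$.
   Context: A symmetric set is $(X,r)$, $r(x,y)=({}^xy,x^y)$ a non-degenerate, involutive bijection of $X\times X$ with $r^{12}r^{23}r^{12}=r^{23}r^{12}r^{23}$; square-free if $r(x,x)=(x,x)$; trivial if $r(x,y)=(y,x)$. $S(X,r)$, $G(X,r)$: monoid, group generated by $X$ with relations $xy=zt$ whenever $r(x,y)=(z,t)\ne(x,y)$. A symmetric group is $(G,\sigma)$, $\sigma(u,v)=({}^uv,u^v)$ involutive with ${}^a1=1,{}^1u=u,1^u=1,a^1=a$, ${}^{ab}u={}^a({}^bu)$, $a^{uv}=(a^u)^v$, ${}^a(uv)=({}^au)({}^{a^u}v)$, $(ab)^u=(a^{{}^bu})(b^u)$, $uv=({}^uv)(u^v)$; $(G,r_G)$ is $G(X,r)$ with the unique such braiding extending $r$. lri on $(G,r_G)$: $({}^ab)^a=b={}^a(b^a)$ for all $a,b\in G$. Retraction: $x\sim y$ iff ${}^xz={}^yz$ for all $z$, with induced map; $\mathrm{mpl}=m$ iff $m$ minimal with the $m$-fold retraction a one-element set. *)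

From mathcomp Require Import all_boot.
From Stdlib Require Import Relations.Relation_Operators.
Set Implicit Arguments. Unset Strict Implicit. Unset Printing Implicit Defensive.

(* ---------- Symmetric sets (X,r), r(x,y) = (lX x y, rX x y) = (^x y, x^y) ---------- *)

Definition r_of {X : Type} (lX rX : X -> X -> X) (p : X * X) : X * X :=
  (lX p.1 p.2, rX p.1 p.2).

Definition r12 {X : Type} (lX rX : X -> X -> X) (t : X * X * X) : X * X * X :=
  let: (a, b, c) := t in let: (a', b') := r_of lX rX (a, b) in (a', b', c).
Definition r23 {X : Type} (lX rX : X -> X -> X) (t : X * X * X) : X * X * X :=
  let: (a, b, c) := t in let: (b', c') := r_of lX rX (b, c) in (a, b', c').

Definition symmetric_set {X : Type} (lX rX : X -> X -> X) : Prop :=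
  [/\ (forall x, bijective (lX x)),
      (forall y, bijective (fun x => rX x y)),
      (forall p, r_of lX rX (r_of lX rX p) = p)
    & (forall t, r12 lX rX (r23 lX rX (r12 lX rX t)) = r23 lX rX (r12 lX rX (r23 lX rX t)))].

Definition square_free {X : Type} (lX rX : X -> X -> X) : Prop :=
  forall x, r_of lX rX (x, x) = (x, x).

Definition trivial_solution {X : Type} (lX rX : X -> X -> X) : Prop :=
  forall x y, r_of lX rX (x, y) = (y, x).

Record grp (G : Type) := Group {
  gmul : G -> G -> G;
  gone : G;
  ginv : G -> G;
  gmulA : forall a b c, gmul a (gmul b c) = gmul (gmul a b) c;
  gmul1g : forall a, gmul gone a = a;
  gmulg1 : forall a, gmul a gone = a;
  gmulVg : forall a, gmul (ginv a) a = gone;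
  gmulgV : forall a, gmul a (ginv a) = gone }.

Definition group_hom {G H : Type} (gG : grp G) (gH : grp H) (h : G -> H) : Prop :=
  forall a b, h (gmul gG a b) = gmul gH (h a) (h b).

Definition respects_rel {X H : Type} (lX rX : X -> X -> X) (gH : grp H) (f : X -> H) :=
  forall x y, gmul gH (f x) (f y) = gmul gH (f (lX x y)) (f (rX x y)).

(* (G, gG, iota) is the group G(X,r) = < X | xy = zt whenever r(x,y) = (z,t) >,
   given by its universal property. *)
Definition is_GXr {X G : Type} (lX rX : X -> X -> X) (gG : grp G) (iota : X -> G) : Prop :=
  respects_rel lX rX gG iota /\
  forall (H : Type) (gH : grp H) (f : X -> H), respects_rel lX rX gH f ->
    exists h : G -> H, [/\ group_hom gG gH h, (forall x, h (iota x) = f x)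
      & forall h', group_hom gG gH h' -> (forall x, h' (iota x) = f x) -> forall a, h' a = h a].

(* The monoid S(X,r): words modulo the congruence generated by xy = zt, r(x,y)=(z,t). *)
Inductive S_step {X : Type} (lX rX : X -> X -> X) : seq X -> seq X -> Prop :=
  | S_step_intro (u v : seq X) (x y : X) :
      S_step lX rX (u ++ [:: x; y] ++ v) (u ++ [:: lX x y; rX x y] ++ v).

Definition S_equiv {X : Type} (lX rX : X -> X -> X) : seq X -> seq X -> Prop :=
  clos_refl_sym_trans (seq X) (S_step lX rX).

Definition word_prod {X G : Type} (gG : grp G) (iota : X -> G) (w : seq X) : G :=
  foldr (fun x acc => gmul gG (iota x) acc) (gone gG) w.

Definition S_embeds {X G : Type} (lX rX : X -> X -> X) (gG : grp G) (iota : X -> G) : Prop :=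
  forall w1 w2, word_prod gG iota w1 = word_prod gG iota w2 -> S_equiv lX rX w1 w2.

(* ---------- Symmetric groups (G, sigma), sigma(u,v) = (lG u v, rG u v) = (^u v, u^v) ---------- *)

Definition symmetric_group {G : Type} (gG : grp G) (lG rG : G -> G -> G) : Prop :=
  let mul := gmul gG in let one := gone gG in
  (forall u v, lG (lG u v) (rG u v) = u /\ rG (lG u v) (rG u v) = v) /\
  ((forall a, lG a one = one) /\ (forall u, lG one u = u)) /\
  ((forall u, rG one u = one) /\ (forall a, rG a one = a)) /\
  (forall a b u, lG (mul a b) u = lG a (lG b u)) /\
  (forall a u v, rG a (mul u v) = rG (rG a u) v) /\
  (forall a u v, lG a (mul u v) = mul (lG a u) (lG (rG a u) v)) /\
  (forall a b u, rG (mul a b) u = mul (rG a (lG b u)) (rG b u)) /\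
  (forall u v, mul u v = mul (lG u v) (rG u v)).

Definition extends_r {X G : Type} (lX rX : X -> X -> X) (iota : X -> G) (lG rG : G -> G -> G) :=
  forall x y, lG (iota x) (iota y) = iota (lX x y) /\ rG (iota x) (iota y) = iota (rX x y).

Definition lri {G : Type} (lG rG : G -> G -> G) : Prop :=
  forall a b, rG (lG a b) a = b /\ lG a (rG b a) = b.

(* The m-fold retraction Ret^m is presented as the setoid (T, ret_rel act m):
   Ret^0 = (T, =); Ret^{k+1} = Ret(Ret^k) identifies [x],[y] iff ^[x][z] = ^[y][z]
   for all [z] in Ret^k, with the induced left action ^[x][z] = [^x z]. *)
Fixpoint ret_rel {T : Type} (act : T -> T -> T) (m : nat) : T -> T -> Prop :=
  match m with
  | 0 => fun x y => x = y
  | k.+1 => fun x y => forall z, ret_rel act k (act x z) (act y z)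
  end.

Definition ret_one_element {T : Type} (act : T -> T -> T) (m : nat) : Prop :=
  inhabited T /\ forall x y, ret_rel act m x y.

Definition mpl_eq {T : Type} (act : T -> T -> T) (m : nat) : Prop :=
  ret_one_element act m /\ forall k, k < m -> ~ ret_one_element act k.

Definition lact_orbit {X G : Type} (iota : X -> G) (lG : G -> G -> G) (y z : X) : Prop :=
  exists a : G, iota z = lG a (iota y).

(** Under lri the right action is determined by the left one, [u^v = ^(v^-1) u],
    and [G] permutes the letters.  Writing [u1 u2 = ^x ((u1 u2)^x)] as a product
    of two letters in a second way, the embedding of [S(X,r)] leaves only the
    rewriting by [r], and this yields [^(^u x) t = ^x t] on letters; generation
    of [G(X,r)] by [X] propagates it to [^(^a c) d = ^c d] on all of [G].  So
    both [X] and [G] have multipermutation level at most 2, and exactly 2 as [r]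
    is not trivial; on an orbit [^z w = w] for all [z, w], so [r] is the flip. *)

From Pilot Require Import Defs.
From mathcomp Require Import all_boot zify.
From Stdlib Require Import ProofIrrelevance Classical.

Set Implicit Arguments.
Unset Strict Implicit.
Unset Printing Implicit Defensive.

Section Groups.
Variables (G : Type) (gG : grp G).
Local Notation mul := (gmul gG).
Local Notation inv := (ginv gG).

Lemma mulgI a : injective (mul a).
Proof.
move=> u v E.
by rewrite -(gmul1g gG u) -(gmulVg gG a) -gmulA E gmulA gmulVg gmul1g.
Qed.

Lemma mulg_eq1_inv a b : mul a b = gone gG -> b = inv a.
Proof. by move=> E; apply: (@mulgI a); rewrite E gmulgV. Qed.

Lemma invgK a : inv (inv a) = a.
Proof. by apply/esym/mulg_eq1_inv; exact: gmulVg. Qed.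

End Groups.

Section GeneratedGroup.
Variables (X G : Type) (lX rX : X -> X -> X) (gG : grp G) (iota : X -> G).

(* The subgroup of elements satisfying [P] is a group receiving [X]; by
   uniqueness in the universal property, its inclusion is onto. *)
Lemma GXr_ind : is_GXr lX rX gG iota -> forall P : G -> Prop,
  P (gone gG) -> (forall a b, P a -> P b -> P (gmul gG a b)) ->
  (forall a, P a -> P (ginv gG a)) -> (forall x, P (iota x)) -> forall a, P a.
Proof.
move=> [resp univ] P P1 PM PV PX.
have sub_eq (u v : {a | P a}) : proj1_sig u = proj1_sig v -> u = v.
  by case: u v => [a pa] [b pb] /= E; subst b; rewrite (proof_irrelevance _ pa pb).
pose H := {a | P a}.
pose hmul (u v : H) : H := exist _ _ (PM _ _ (proj2_sig u) (proj2_sig v)).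
pose hinv (u : H) : H := exist _ _ (PV _ (proj2_sig u)).
pose hone : H := exist _ _ P1.
have hA a b c : hmul a (hmul b c) = hmul (hmul a b) c by apply/sub_eq/gmulA.
have h1g a : hmul hone a = a by apply/sub_eq/gmul1g.
have hg1 a : hmul a hone = a by apply/sub_eq/gmulg1.
have hVg a : hmul (hinv a) a = hone by apply/sub_eq/gmulVg.
have hgV a : hmul a (hinv a) = hone by apply/sub_eq/gmulgV.
pose gH := @Defs.Group H hmul hone hinv hA h1g hg1 hVg hgV.
pose f x : H := exist _ _ (PX x).
have resp_f : respects_rel lX rX gH f by move=> x y; apply/sub_eq/resp.
have [h [hom_h h_iota _]] := univ H gH f resp_f.
have [h0 [_ _ uniq]] := univ G gG iota resp.
pose k a := proj1_sig (h a).
have hom_k : group_hom gG gG k by move=> a b; rewrite /k hom_h.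
have k_iota x : k (iota x) = iota x by rewrite /k h_iota.
move=> a; have ka : k a = a.
  have := uniq id (fun _ _ => erefl) (fun _ => erefl) a.
  by rewrite -(uniq k hom_k k_iota a).
by rewrite -ka; exact: proj2_sig.
Qed.

Lemma S_step_size w1 w2 :
  S_step lX rX w1 w2 -> 2 <= size w1 /\ size w2 = size w1.
Proof. by case=> u v x y; rewrite !size_cat /=; split; lia. Qed.

Lemma S_step_pair w1 w2 : S_step lX rX w1 w2 -> size w1 = 2 ->
  exists x y, w1 = [:: x; y] /\ w2 = [:: lX x y; rX x y].
Proof.
case=> u v x y; rewrite !size_cat /= => E.
have [-> ->] : u = [::] /\ v = [::] by case: u v E => [|? ?] [|? ?] //=; lia.
by exists x, y.
Qed.

Lemma S_equiv_invariant (Q : seq X -> Prop) :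
  (forall w1 w2, S_step lX rX w1 w2 -> Q w1 <-> Q w2) ->
  forall w1 w2, S_equiv lX rX w1 w2 -> Q w1 <-> Q w2.
Proof.
move=> inv_step w1 w2; elim=> {w1 w2} [? ? /inv_step //| // | ? ? _ [? ?] |].
  by split.
by move=> ? ? ? _ [? ?] _ [? ?]; split; auto.
Qed.

Hypothesis embeds : S_embeds lX rX gG iota.

Lemma S_embeds_inj : injective iota.
Proof.
move=> x y E.
have /(S_equiv_invariant (Q := fun w => w = [:: x])) equiv :
    S_equiv lX rX [:: x] [:: y].
  by apply: embeds; rewrite /= E.
suff [] : [:: y] = [:: x] by [].
apply/equiv => // w1 w2 /S_step_size [ge2 Es].
by split=> Ew; move: ge2; [rewrite Ew | rewrite -Es Ew].
Qed.

(* The only words of length 2 equivalent to [st] are [st] and [r(s,t)]. *)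
Lemma S_embeds_pair : involutive (r_of lX rX) ->
  forall p q s t, gmul gG (iota p) (iota q) = gmul gG (iota s) (iota t) ->
  (p = s /\ q = t) \/ (p = lX s t /\ q = rX s t).
Proof.
move=> rK p q s t E.
have rKl x y : lX (lX x y) (rX x y) = x by have := rK (x, y); case.
have rKr x y : rX (lX x y) (rX x y) = y by have := rK (x, y); case.
pose Q w := w = [:: s; t] \/ w = [:: lX s t; rX s t].
have /(S_equiv_invariant (Q := Q)) equiv : S_equiv lX rX [:: p; q] [:: s; t].
  by apply: embeds; rewrite /= !gmulg1.
have size_Q w : Q w -> size w = 2 by case=> ->.
have : Q [:: p; q]; last by case=> [[-> ->]|[-> ->]]; [left|right].
apply/equiv; last by left.
move=> w1 w2 step; have [_ Es] := S_step_size step; split=> Qw.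
- have [x [y [E1 E2]]] := S_step_pair step (size_Q _ Qw); subst w1 w2.
  by rewrite /Q; case: Qw => [[-> ->]|[-> ->]]; [right|left; rewrite rKl rKr].
- have [x [y [E1 E2]]] := S_step_pair step (etrans (esym Es) (size_Q _ Qw)).
  subst w1 w2; rewrite /Q; case: Qw => [[<- <-]|[Es1 Et1]].
    by right; rewrite rKl rKr.
  left; congr [:: _; _]; first by rewrite -(rKl x y) Es1 Et1 rKl.
  by rewrite -(rKr x y) Es1 Et1 rKr.
Qed.

End GeneratedGroup.

Section SymmetricGroupLri.
Variables (G : Type) (gG : grp G) (lG rG : G -> G -> G).
Hypotheses (hsym : symmetric_group gG lG rG) (hlri : lri lG rG).
Local Notation mul := (gmul gG).
Local Notation one := (gone gG).
Local Notation inv := (ginv gG).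

Lemma lactg1 a : lG a one = one.
Proof. by case: hsym => _ [[-> _] _]. Qed.

Lemma lact1g u : lG one u = u.
Proof. by case: hsym => _ [[_ ->] _]. Qed.

Lemma lactM a b u : lG (mul a b) u = lG a (lG b u).
Proof. by case: hsym => _ [_ [_ [-> _]]]. Qed.

Lemma lactMr a u v : lG a (mul u v) = mul (lG a u) (lG (rG a u) v).
Proof. by case: hsym => _ [_ [_ [_ [_ [-> _]]]]]. Qed.

Lemma ractMl a b u : rG (mul a b) u = mul (rG a (lG b u)) (rG b u).
Proof. by case: hsym => _ [_ [_ [_ [_ [_ [-> _]]]]]]. Qed.

Lemma ract_sigma u v : rG (lG u v) (rG u v) = v.
Proof. by case: hsym => /(_ u v) []. Qed.

Lemma ract_lactK a b : rG (lG a b) a = b.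
Proof. by case: (hlri a b). Qed.

Lemma lact_ractK a b : lG a (rG b a) = b.
Proof. by case: (hlri a b). Qed.

Lemma lactK a : cancel (lG a) (lG (inv a)).
Proof. by move=> u; rewrite -lactM gmulVg lact1g. Qed.

Lemma lactVK a : cancel (lG (inv a)) (lG a).
Proof. by move=> u; rewrite -lactM gmulgV lact1g. Qed.

Lemma lact_inj a : injective (lG a).
Proof. exact: can_inj (lactK a). Qed.

Lemma ractE u v : rG u v = lG (inv v) u.
Proof. by apply: (@lact_inj v); rewrite lactVK lact_ractK. Qed.

Lemma lact_ractl u v : lG (rG u v) v = lG u v.
Proof. by rewrite -{2}(ract_sigma u v) lact_ractK. Qed.

Lemma lact_lactl v w : lG (lG v w) v = lG w v.
Proof. by rewrite -lact_ractl ract_lactK. Qed.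

Lemma lactV u v : lG u (inv v) = inv (lG u v).
Proof.
have lactV_ract w : lG (rG w v) (inv v) = inv (lG w v).
  by apply: mulg_eq1_inv; rewrite -lactMr gmulgV lactg1.
by rewrite -{1}(ract_lactK v u) lactV_ract lact_lactl.
Qed.

Section Idempotent.
Variable w : G.
Hypotheses (lww : lG w w = w) (rww : rG w w = w).

(* Apply lri to [b w] with [b = ^w p] and cancel [b] on the left. *)
Lemma lact_ract_idem p : lG (rG w p) w = w.
Proof.
set b := lG w p.
have E : lG w (rG (mul b w) w) = mul b w by exact: lact_ractK.
rewrite ractMl lww rww lactMr lact_ractK in E.
by have := mulgI E; rewrite /b ract_lactK.
Qed.

Lemma lact_lact_idem q : lG (lG q w) w = w.
Proof. by have := lact_ract_idem (inv q); rewrite ractE invgK. Qed.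

End Idempotent.

Section GeneratedByX.
Variables (X : Type) (lX rX : X -> X -> X) (iota : X -> G).
Hypotheses (hX : symmetric_set lX rX) (hsf : square_free lX rX).
Hypotheses (hG : is_GXr lX rX gG iota) (hemb : S_embeds lX rX gG iota).
Hypothesis hext : extends_r lX rX iota lG rG.

Lemma lX_bij x : bijective (lX x).
Proof. by case: hX. Qed.

Lemma r_of_involutive : involutive (r_of lX rX).
Proof. by case: hX. Qed.

Lemma lact_iota x y : lG (iota x) (iota y) = iota (lX x y).
Proof. by case: (hext x y). Qed.

Lemma ract_iota x y : rG (iota x) (iota y) = iota (rX x y).
Proof. by case: (hext x y). Qed.

Lemma lact_iota_image c x : exists z, lG c (iota x) = iota z.
Proof.
suff image_bij : forall c x, (exists z, lG c (iota x) = iota z) /\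
                             (exists z, lG c (iota z) = iota x).
  by case: (image_bij c x).
elim/(GXr_ind hG) => {c x} [x | a b IHa IHb x | a IHa x | u x]; split.
- by exists x; rewrite lact1g.
- by exists x; rewrite lact1g.
- have [[y Ey] _] := IHb x; have [[z Ez] _] := IHa y.
  by exists z; rewrite lactM Ey.
- have [_ [y Ey]] := IHa x; have [_ [z Ez]] := IHb y.
  by exists z; rewrite lactM Ez.
- by have [_ [z <-]] := IHa x; exists z; rewrite lactK.
- by have [[z Ez] _] := IHa x; exists z; rewrite -Ez lactK.
- by exists (lX u x); rewrite lact_iota.
- have [g _ lXg] := lX_bij u; by exists (g x); rewrite lact_iota lXg.
Qed.

Lemma lX_idem x : lX x x = x.
Proof. by case: (hsf x). Qed.

Lemma rX_idem x : rX x x = x.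
Proof. by case: (hsf x). Qed.

Lemma lact_orbit_iota c z w : iota z = lG c (iota w) ->
  lG (iota z) (iota w) = iota w /\ lG (iota w) (iota z) = iota z.
Proof.
have self v d : lG (lG d (iota v)) (iota v) = iota v.
  by apply: lact_lact_idem; rewrite ?lact_iota ?ract_iota ?lX_idem ?rX_idem.
move=> Ez; split; first by rewrite Ez self.
have Ew : iota w = lG (inv c) (iota z) by rewrite Ez lactK.
by rewrite {1}Ew self.
Qed.

Lemma mul_iota_pair p q s t :
  mul (iota p) (iota q) = mul (iota s) (iota t) ->
  (iota p = iota s /\ iota q = iota t) \/
  (iota p = lG (iota s) (iota t) /\ iota q = rG (iota s) (iota t)).
Proof.
rewrite lact_iota ract_iota.
by case/(S_embeds_pair hemb r_of_involutive) => [[-> ->]|[-> ->]]; [left|right].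
Qed.

(* [u1 u2 = ^x (A B)] with [A B = (u1 u2)^x], and both sides are products of
   two letters; in the exceptional case of [S_embeds_pair], [u1] and [u2] lie in
   one orbit, which again forces [^x A = u1]. *)
Lemma lact_ract_lact_iota x u1 u2 :
  lG (iota x) (rG (iota u1) (lG (iota u2) (iota x))) = iota u1.
Proof.
set y := lG (iota u2) (iota x); set A := rG (iota u1) y.
set B := rG (iota u2) (iota x).
have factor : mul (iota u1) (iota u2) = mul (lG (iota x) A) (lG (rG (iota x) A) B).
  by rewrite -lactMr -ractMl lact_ractK.
have [p Ep] : exists p, lG (iota x) A = iota p.
  by rewrite /A /y !lact_iota ract_iota lact_iota; eexists.
have [q Eq] : exists q, lG (rG (iota x) A) B = iota q.
  by rewrite /A /B /y !lact_iota !ract_iota lact_iota; eexists.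
rewrite Ep Eq in factor.
case/esym/mul_iota_pair: factor => [[Ep1 _] | [Ep' Eq']]; first by rewrite Ep Ep1.
have orbit : iota u1 = lG (mul y (mul (inv (iota x)) (iota u1))) (iota u2).
  by rewrite !lactM -Ep' -Ep lactK lact_ractK.
have [u1u2 u2u1] := lact_orbit_iota orbit.
have Ep2 : lG (iota x) A = iota u2 by rewrite Ep Ep' u1u2.
have Er : rG (iota u1) (iota u2) = iota u1 by rewrite ractE -{1}u2u1 lactK.
have EBA : B = A by rewrite /B ractE -Ep2 lactK.
by rewrite -lact_ractl -{2}EBA Eq Eq' Er.
Qed.

Lemma lact_lX_iota u x t : lG (iota (lX u x)) (iota t) = lG (iota x) (iota t).
Proof.
have := lact_ract_lact_iota x (lX (lX u x) t) u.
by rewrite -!lact_iota ract_lactK => ->.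
Qed.

Lemma lact_lact_iota c x t :
  lG (lG c (iota x)) (iota t) = lG (iota x) (iota t).
Proof.
elim/(GXr_ind hG): c x t => [x t | a b IHa IHb x t | a IHa x t | u x t].
- by rewrite lact1g.
- by have [z Ez] := lact_iota_image b x; rewrite lactM Ez IHa -Ez IHb.
- have [z Ez] := lact_iota_image (inv a) x.
  have Ez' : lG a (iota z) = iota x by rewrite -Ez lactVK.
  by rewrite Ez -Ez' IHa.
- by rewrite lact_iota lact_lX_iota.
Qed.

Lemma lact_lact_on_iota c b t : lG (lG b c) (iota t) = lG c (iota t).
Proof.
elim/(GXr_ind hG): c b t => [b t | c1 c2 IH1 IH2 b t | c IHc b t | u b t].
- by rewrite lactg1.
- have [z Ez] := lact_iota_image c2 t.
  by rewrite lactMr lactM IH2 Ez IH1 -Ez lactM.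
- have [z Ez] := lact_iota_image (inv c) t.
  have Ez' : lG c (iota z) = iota t by rewrite -Ez lactVK.
  by rewrite lactV Ez -Ez' -(IHc b z) lactK.
- exact: lact_lact_iota.
Qed.

Lemma lact_fixed_of_iota g u :
  (forall t, lG g (iota t) = iota t) -> lG g u = u.
Proof.
elim/(GXr_ind hG): u g => [g _ | u v IHu IHv g hg | u IHu g hg | x g hg].
- exact: lactg1.
- rewrite lactMr IHu // ractE IHv // => t.
  by rewrite lact_lact_on_iota hg.
- by rewrite lactV IHu.
- exact: hg.
Qed.

Lemma lact_lact a c d : lG (lG a c) d = lG c d.
Proof.
set g := mul (inv c) (lG a c).
have gd : lG g d = d.
  by apply: lact_fixed_of_iota => t; rewrite lactM lact_lact_on_iota lactK.
by rewrite -{2}gd -lactM /g gmulA gmulgV gmul1g.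
Qed.

End GeneratedByX.
End SymmetricGroupLri.

Lemma trivial_solution_of_lX (X : Type) (lX rX : X -> X -> X) :
  involutive (r_of lX rX) -> (forall x y, lX x y = y) -> trivial_solution lX rX.
Proof.
move=> rK lXE x y; rewrite /r_of /= lXE; congr pair.
by have := rK (x, y); rewrite /r_of /= !lXE; case.
Qed.

Lemma r_of_flip (X : Type) (lX rX : X -> X -> X) z w :
  (forall x, injective (lX x)) -> involutive (r_of lX rX) ->
  lX z w = w -> lX w z = z -> r_of lX rX (z, w) = (w, z).
Proof.
move=> lX_inj rK lzw lwz; rewrite /r_of /= lzw; congr pair; apply: (@lX_inj w).
by have := rK (z, w); rewrite /r_of /= lzw lwz; case.
Qed.

Lemma mpl_eq_2 (T : Type) (act : T -> T -> T) :
  (forall x z w, act (act x z) w = act z w) -> (forall y, exists e, act e y = y) ->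
  ~ (forall x y, act x y = y) -> mpl_eq act 2.
Proof.
move=> act2 has_fix nontriv.
have inhT : inhabited T.
  by case: (classic (inhabited T)) => // noT; case: nontriv => x; case: noT.
split; first by split=> // x y z w /=; rewrite !act2.
case=> [|[|k]] // _ [_ ret]; apply: nontriv => x y; have [e ey] := has_fix y.
- by rewrite (ret x e).
- by rewrite (ret x e y).
Qed.

Theorem mainTheorem15
  (X : Type) (lX rX : X -> X -> X)
  (G : Type) (gG : grp G) (iota : X -> G) (lG rG : G -> G -> G) :
  symmetric_set lX rX ->
  square_free lX rX ->
  ~ trivial_solution lX rX ->
  is_GXr lX rX gG iota ->
  S_embeds lX rX gG iota ->
  symmetric_group gG lG rG ->
  extends_r lX rX iota lG rG ->
  lri lG rG ->
  (forall y : X,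
     (forall z w, lact_orbit iota lG y z -> lact_orbit iota lG y w ->
        r_of lX rX (z, w) = (w, z))
     \/ (forall z w, lact_orbit iota lG y z -> lact_orbit iota lG y w -> z = w))
  /\ mpl_eq lX 2 /\ mpl_eq lG 2.
Proof.
move=> hX hsf nontriv hG hemb hsym hext hlri.
have inj := S_embeds_inj hemb.
have rK := r_of_involutive hX.
have lG_lG := lact_lact hsym hlri hX hsf hG hemb hext.
have lX_nontriv : ~ (forall x y, lX x y = y).
  by move=> lXE; apply/nontriv/trivial_solution_of_lX.
split.
  move=> y; left=> z w [a Ez] [b Ew].
  have Ezw : iota z = lG (gmul gG a (ginv gG b)) (iota w).
    by rewrite Ew (lactM hsym) (lactK hsym).
  have [lzw lwz] := lact_orbit_iota hsym hlri hsf hext Ezw.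
  apply: r_of_flip => //; first by move=> x; apply/bij_inj/(lX_bij hX).
    by apply: inj; rewrite -(lact_iota hext).
  by apply: inj; rewrite -(lact_iota hext).
split; apply: mpl_eq_2 => //.
- by move=> x z w; apply: inj; rewrite -!(lact_iota hext) lG_lG.
- by move=> x; exists x; exact: (lX_idem hsf).
- by move=> u; exists (gone gG); exact: (lact1g hsym).
- move=> lGE; apply: lX_nontriv => x y; apply: inj.
  by rewrite -(lact_iota hext) lGE.
Qed.
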